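(* Let $L_0\in\mathbb{R}^{n\times n}$ have reduced SVD $L_0=U\Sigma V^*$, let $\lambda>0$, let $\Omega_{\mathrm{obs}}\subset[n]\times[n]$, let $\Omega\subset\Omega_{\mathrm{obs}}$, let $\Gamma=\Omega_{\mathrm{obs}}\setminus\Omega$, and let $S_0'$ be a matrix supported on $\Omega$. Assume $\|\mathcal{P}_{\Gamma^\perp}\mathcal{P}_T\|<1$. Then $(L_0,S_0')$ is the unique solution of \[ \text{minimize } \|L\|_*+\lambda\|S\|_1\quad\text{subject to}\quad\mathcal{P}_{\Omega_{\mathrm{obs}}}(L+S)=\mathcal{P}_{\Omega_{\mathrm{obs}}}L_0+S_0' \] if there is a pair $(W,F)$ obeying \[ UV^*+W=\lambda(\mathrm{sgn}(S_0')+F), \] with $\mathcal{P}_TW=0$, $\|W\|<1$, $\mathcal{P}_{\Gamma^\perp}F=0$ and $\|F\|_\infty<1$.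
   Context: $U,V\in\mathbb{R}^{n\times r}$ have orthonormal columns; $T=\{UX^*+YV^*: X,Y\in\mathbb{R}^{n\times r}\}$ and $\mathcal{P}_T$ is the orthogonal projection onto $T$ (trace inner product). For an index set $A$, $\mathcal{P}_A$ keeps entries in $A$ and zeroes the rest; $\mathcal{P}_{\Gamma^\perp}=\mathcal{I}-\mathcal{P}_\Gamma$ keeps the entries outside $\Gamma$. $\|\mathcal{P}_{\Gamma^\perp}\mathcal{P}_T\|$ is the operator norm w.r.t. the Frobenius norm; $\|W\|$ is the spectral norm, $\|F\|_\infty=\max_{ij}|F_{ij}|$, $\|\cdot\|_*$ the nuclear norm, $\|S\|_1=\sum_{ij}|S_{ij}|$, $\mathrm{sgn}$ the entrywise sign with $\mathrm{sgn}(0)=0$. *)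

From HB Require Import structures.
From mathcomp Require Import all_boot all_order all_algebra.
From mathcomp Require Import boolp classical_sets reals.
Set Implicit Arguments. Unset Strict Implicit. Unset Printing Implicit Defensive.
Import Order.TTheory GRing.Theory Num.Theory.
Local Open Scope ring_scope.
Local Open Scope classical_set_scope.

Section Defs.
Variable R : realType.

Definition mxdot (m n : nat) (A B : 'M[R]_(m, n)) : R := \tr (A^T *m B).

Definition frob (m n : nat) (A : 'M[R]_(m, n)) : R :=
  Num.sqrt (\sum_i \sum_j (A i j) ^+ 2).

Definition vnorm (n : nat) (x : 'cV[R]_n) : R := Num.sqrt (\sum_i (x i 0) ^+ 2).

Definition specnorm (m n : nat) (A : 'M[R]_(m, n)) : R :=
  sup [set vnorm (A *m x) | x in [set x : 'cV[R]_n | vnorm x = 1]].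

Definition psd (n : nat) (P : 'M[R]_n) : Prop :=
  P^T = P /\ forall x : 'cV[R]_n, 0 <= (x^T *m P *m x) 0 0.

Definition sqrtm (n : nat) (A : 'M[R]_n) : 'M[R]_n :=
  xget 0 [set P : 'M[R]_n | psd P /\ P *m P = A].

(* nuclear norm ||L||_* = tr sqrt(L^* L) = sum of singular values *)
Definition nucnorm (m n : nat) (L : 'M[R]_(m, n)) : R := \tr (sqrtm (L^T *m L)).

Definition l1norm (m n : nat) (S : 'M[R]_(m, n)) : R := \sum_i \sum_j `|S i j|.
Definition linfnorm (m n : nat) (F : 'M[R]_(m, n)) : R :=
  \big[Num.max/0]_i \big[Num.max/0]_j `|F i j|.
Definition sgnmx (m n : nat) (S : 'M[R]_(m, n)) : 'M[R]_(m, n) :=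
  \matrix_(i, j) Num.sg (S i j).

Definition PA (n : nat) (A : {set 'I_n * 'I_n}) (M : 'M[R]_n) : 'M[R]_n :=
  \matrix_(i, j) (if (i, j) \in A then M i j else 0).

Definition PAperp (n : nat) (A : {set 'I_n * 'I_n}) (M : 'M[R]_n) : 'M[R]_n :=
  M - PA A M.

Definition inT (n r : nat) (U V : 'M[R]_(n, r)) (M : 'M[R]_n) : Prop :=
  exists X Y : 'M[R]_(n, r), M = U *m X^T + Y *m V^T.

Definition PT (n r : nat) (U V : 'M[R]_(n, r)) (M : 'M[R]_n) : 'M[R]_n :=
  xget 0 [set P : 'M[R]_n | inT U V P /\
                            forall Q, inT U V Q -> mxdot (M - P) Q = 0].

Definition opnorm_frob (n : nat) (f : 'M[R]_n -> 'M[R]_n) : R :=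
  sup [set frob (f M) | M in [set M : 'M[R]_n | frob M <= 1]].

End Defs.

From HB Require Import structures.
From mathcomp Require Import all_boot all_order all_algebra.
From mathcomp Require Import classical_sets reals.
From mathcomp Require Import complex.
From mathcomp Require Import ring lra.
Import Order.TTheory GRing.Theory Num.Theory.

(** A contraction Z satisfies <Z, L> <= ||L||_*, with equality at L0 = U Sigma V^*
    when Z = UV^* + W0 and U^* W0 = 0.  For feasible (L, S) put H = L - L0 and
    Z = UV^* + W + eps P_{T^perp} H: for small eps > 0 the perturbed W still has
    norm at most 1 and is orthogonal to U and V, so Z is a contraction.  Together
    with UV^* + W = lambda (sgn S0' + F) and an entrywise comparison of l1 norms,
    the objective at (L, S) exceeds its value at (L0, S0') by at least
      lambda * sum_{(i,j) notin Omega} (1 - |F_ij|) |S_ij| + eps ||P_{T^perp} H||_F^2.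
    If it does not increase, S vanishes off Omega and H lies in T; feasibility
    then makes H vanish on Gamma, and ||P_{Gamma^perp} P_T|| < 1 forces H = 0. *)

Set Implicit Arguments.
Unset Strict Implicit.
Unset Printing Implicit Defensive.
Local Open Scope ring_scope.

Section Euclidean.
Variable R : realType.

Lemma sum_sqr_eq0 (I : finType) (f : I -> R) :
  \sum_i f i ^+ 2 = 0 -> forall i, f i = 0.
Proof.
move=> f0 i; have := @psumr_eq0P _ _ predT (fun i => f i ^+ 2).
by move=> /(_ (fun i _ => sqr_ge0 _) f0 i isT) /eqP; rewrite sqrf_eq0 => /eqP.
Qed.

Lemma cauchy_schwarz_sum (I : finType) (f g : I -> R) :
  \sum_i f i * g i <= Num.sqrt (\sum_i f i ^+ 2) * Num.sqrt (\sum_i g i ^+ 2).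
Proof.
set a := Num.sqrt _; set b := Num.sqrt _.
have ha : a ^+ 2 = \sum_i f i ^+ 2 by rewrite sqr_sqrtr ?sumr_ge0 // => i _; apply: sqr_ge0.
have hb : b ^+ 2 = \sum_i g i ^+ 2 by rewrite sqr_sqrtr ?sumr_ge0 // => i _; apply: sqr_ge0.
(* Expand 0 <= sum_i (b f_i - a g_i)^2. *)
have key : 0 <= 2 * (a * b) * (a * b - \sum_i f i * g i).
  have : 0 <= \sum_i (b * f i - a * g i) ^+ 2 by apply: sumr_ge0 => i _; apply: sqr_ge0.
  have -> : \sum_i (b * f i - a * g i) ^+ 2 =
     \sum_i (b ^+ 2 * f i ^+ 2 + (a ^+ 2 * g i ^+ 2 - 2 * (a * b) * (f i * g i))).
    by apply: eq_bigr => i _; ring.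
  rewrite big_split sumrB /= -!mulr_sumr -ha -hb.
  suff -> : b ^+ 2 * a ^+ 2 + (a ^+ 2 * b ^+ 2 - 2 * (a * b) * \sum_i f i * g i) =
            2 * (a * b) * (a * b - \sum_i f i * g i) by [].
  ring.
have [/eqP|ab_neq0] := eqVneq (a * b) 0.
  rewrite mulf_eq0 => /orP [] /eqP ab0.
    have f0 : forall i, f i = 0 by apply: sum_sqr_eq0; rewrite -ha ab0 expr0n.
    by rewrite ab0 mul0r big1 // => i _; rewrite f0 mul0r.
  have g0 : forall i, g i = 0 by apply: sum_sqr_eq0; rewrite -hb ab0 expr0n.
  by rewrite ab0 mulr0 big1 // => i _; rewrite g0 mulr0.
have ab_gt0 : 0 < a * b by rewrite lt0r ab_neq0 mulr_ge0 ?sqrtr_ge0.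
by rewrite -subr_ge0; move: key; rewrite pmulr_rge0 // mulr_gt0.
Qed.

Definition vdot n (u v : 'cV[R]_n) : R := (u^T *m v) 0 0.

Lemma vdotE n (u v : 'cV[R]_n) : vdot u v = \sum_i u i 0 * v i 0.
Proof. by rewrite /vdot mxE; apply: eq_bigr => i _; rewrite mxE. Qed.

Lemma vdot_sqrE n (x : 'cV[R]_n) : vdot x x = \sum_i x i 0 ^+ 2.
Proof. by rewrite vdotE; apply: eq_bigr => i _; rewrite expr2. Qed.

Lemma vdot_ge0 n (x : 'cV[R]_n) : 0 <= vdot x x.
Proof. by rewrite vdot_sqrE; apply: sumr_ge0 => i _; apply: sqr_ge0. Qed.

Lemma vdot_eq0 n (x : 'cV[R]_n) : vdot x x = 0 -> x = 0.
Proof. by rewrite vdot_sqrE => /sum_sqr_eq0 x0; apply/matrixP => i j; rewrite ord1 x0 mxE. Qed.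

Lemma vdotDD n (u v : 'cV[R]_n) :
  vdot (u + v) (u + v) = vdot u u + 2 * vdot u v + vdot v v.
Proof.
rewrite !vdot_sqrE vdotE mulr_sumr -!big_split /=; apply: eq_bigr => i _.
by rewrite mxE; ring.
Qed.

Lemma vnormE n (x : 'cV[R]_n) : vnorm x = Num.sqrt (vdot x x).
Proof. by rewrite vdot_sqrE. Qed.

Lemma vnorm0 n : vnorm (0 : 'cV[R]_n) = 0.
Proof. by rewrite vnormE vdot_sqrE big1 ?sqrtr0 // => i _; rewrite mxE expr0n. Qed.

Lemma vnorm_ge0 n (x : 'cV[R]_n) : 0 <= vnorm x.
Proof. exact: sqrtr_ge0. Qed.

Lemma sqr_vnorm n (x : 'cV[R]_n) : vnorm x ^+ 2 = vdot x x.
Proof. by rewrite vnormE sqr_sqrtr // vdot_ge0. Qed.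

Lemma vnormZ n c (x : 'cV[R]_n) : vnorm (c *: x) = `|c| * vnorm x.
Proof.
rewrite !vnormE !vdot_sqrE -sqrtr_sqr -sqrtrM ?sqr_ge0 // mulr_sumr.
by congr Num.sqrt; apply: eq_bigr => i _; rewrite mxE exprMn.
Qed.

Lemma vdot_le n (u v : 'cV[R]_n) : vdot u v <= vnorm u * vnorm v.
Proof. by rewrite vdotE; apply: cauchy_schwarz_sum. Qed.

Lemma normr_vdot_le n (u v : 'cV[R]_n) : `|vdot u v| <= vnorm u * vnorm v.
Proof.
rewrite ler_norml vdot_le andbT lerNl.
have -> : - vdot u v = vdot (- u) v by rewrite /vdot linearN /= mulNmx [RHS]mxE.
have -> : vnorm u = vnorm (- u) by rewrite -scaleN1r vnormZ normrN1 mul1r.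
exact: vdot_le.
Qed.

Lemma vnormD n (u v : 'cV[R]_n) : vnorm (u + v) <= vnorm u + vnorm v.
Proof.
rewrite -(@ler_pXn2r _ 2) ?nnegrE ?addr_ge0 ?vnorm_ge0 //.
rewrite sqr_vnorm vdotDD sqrrD !sqr_vnorm.
by have := vdot_le u v; lra.
Qed.

Definition contraction m n (Z : 'M[R]_(m, n)) : Prop :=
  forall x : 'cV[R]_n, vnorm (Z *m x) <= vnorm x.

End Euclidean.

Section SymmetricSpectral.
Variable R : realType.
Local Notation toC := (real_complex R).

Lemma symmetric_eigenvalue_real n (A : 'M[R]_n) (w : 'rV[R[i]]_n) (z : R[i]) :
  A^T = A -> w != 0 -> w *m map_mx toC A = z *: w -> z^* = z.
Proof.
move=> symA w_neq0 wA.
set wc := map_mx conjc w.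
have AC : map_mx conjc (map_mx toC A) = map_mx toC A.
  by apply/matrixP => i j; rewrite !mxE conjc_real.
have wcA : wc *m map_mx toC A = z^* *: wc.
  by rewrite /wc -AC -map_mxM wA map_mxZ.
have E1 : w *m map_mx toC A *m wc^T = z *: (w *m wc^T) by rewrite wA scalemxAl.
have E2 : w *m map_mx toC A *m wc^T = z^* *: (w *m wc^T).
  rewrite -mulmxA -[map_mx toC A *m wc^T]trmxK trmx_mul trmxK.
  have -> : (map_mx toC A)^T = map_mx toC A.
    by apply/matrixP => i j; rewrite !mxE -{1}symA mxE.
  by rewrite wcA linearZ /= scalemxAr.
have ww_neq0 : (w *m wc^T) 0 0 != 0.
  by have := dotmx_is_dotmx w_neq0; rewrite dotmxE map_trmx => ww; rewrite gt_eqF.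
move: E1; rewrite E2 => /matrixP/(_ 0 0); rewrite [LHS]mxE [RHS]mxE => /eqP.
by rewrite -subr_eq0 -mulrBl mulf_eq0 (negPf ww_neq0) orbF subr_eq0 => /eqP.
Qed.

(* The eigenvalue supplied by the algebraically closed field R[i] is real by
   symmetry, hence also an eigenvalue of C over R. *)
Lemma symmetric_eigenvector_sub n k (A : 'M[R]_n) (B : 'M[R]_(k, n)) (C : 'M[R]_k) :
  A^T = A -> (0 < k)%N -> row_free B -> B *m A = C *m B ->
  exists2 x : 'rV[R]_n, x != 0 & (x <= B)%MS /\ exists mu, x *m A = mu *: x.
Proof.
move=> symA k_gt0 frB BAC.
have [z /eigenvalueP [u uCz u_neq0]] := eigenvalue_closed (map_mx toC C) k_gt0.
have w_neq0 : u *m map_mx toC B != 0 by rewrite mulmx_free_eq0 ?row_free_map.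
have wA : u *m map_mx toC B *m map_mx toC A = z *: (u *m map_mx toC B).
  by rewrite -mulmxA -map_mxM BAC map_mxM mulmxA uCz scalemxAl.
have zr := symmetric_eigenvalue_real symA w_neq0 wA; clear wA w_neq0.
move: z zr uCz => [a b] /= [] b0 uCz.
have {b0}b0 : b = 0 by lra.
subst b.
have : eigenvalue (map_mx toC C) (toC a) by apply/eigenvalueP; exists u.
rewrite eigenvalue_root_char -map_char_poly fmorph_root -eigenvalue_root_char.
move=> /eigenvalueP [v vC v_neq0].
exists (v *m B); first by rewrite mulmx_free_eq0.
split; first exact: submxMl.
by exists a; rewrite -mulmxA BAC mulmxA vC scalemxAl.
Qed.

Lemma unit_scale_row n (x : 'rV[R]_n) : x != 0 ->
  exists c : R, (c *: x) *m (c *: x)^T = 1%:M.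
Proof.
move=> x_neq0; have xx_gt0 : 0 < (x *m x^T) 0 0.
  rewrite -{1}[x]trmxK -/(vdot x^T x^T) lt0r vdot_ge0 andbT.
  by apply: contra x_neq0 => /eqP /vdot_eq0 /eqP; rewrite trmx_eq0.
set nx := (x *m x^T) 0 0 in xx_gt0; exists (Num.sqrt nx)^-1.
rewrite linearZ /= -scalemxAl -scalemxAr scalerA [x *m _]mx11_scalar -/nx.
by rewrite scale_scalar_mx -invfM -expr2 sqr_sqrtr ?ltW // mulVf ?gt_eqF.
Qed.

(* The orthogonal complement of k orthonormal eigenrows is A-invariant, so it
   contains a further unit eigenrow. *)
Lemma symmetric_orthonormal_eigenrows n (A : 'M[R]_n) : A^T = A ->
  forall k, (k <= n)%N -> exists (O : 'M[R]_(k, n)) (d : 'rV[R]_k),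
    O *m O^T = 1%:M /\ O *m A = diag_mx d *m O.
Proof.
move=> symA; elim=> [|k IH] lt_kn.
  exists 0, 0; split; first by apply/matrixP => i [].
  by apply/matrixP => [[]].
have [O [d [OO OA]]] := IH (ltnW lt_kn).
have rkO : \rank O = k.
  apply/eqP; rewrite eqn_leq rank_leq_row /=.
  by rewrite -{1}(mxrank1 R k) -OO mxrankM_maxl.
set K := kermx O^T.
have KA : (row_base K *m A <= row_base K)%MS.
  rewrite eq_row_base sub_kermx.
  have /sub_kermxP BO : (row_base K <= K)%MS by rewrite eq_row_base.
  by rewrite -mulmxA -{1}symA -trmx_mul OA trmx_mul tr_diag_mx mulmxA BO mul0mx.
have [C BAC] := submxP KA.
have K_gt0 : (0 < \rank K)%N by rewrite mxrank_ker mxrank_tr rkO subn_gt0.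
have [x x_neq0 [xK [mu xA]]] :=
  symmetric_eigenvector_sub symA K_gt0 (row_base_free K) BAC.
have xO : x *m O^T = 0 by apply/sub_kermxP; rewrite -/K -(eq_row_base K).
have [c yy] := unit_scale_row x_neq0; set y := c *: x in yy.
have yO : y *m O^T = 0 by rewrite /y -scalemxAl xO scaler0.
have yA : y *m A = mu *: y by rewrite /y -scalemxAl xA scalerA mulrC -scalerA.
rewrite -addn1; exists (col_mx O y), (row_mx d mu%:M); split.
  rewrite tr_col_mx mul_col_row OO yy yO -(trmxK (O *m y^T)) trmx_mul trmxK yO.
  by rewrite trmx0 [RHS]scalar_mx_block.
rewrite mul_col_mx diag_mx_row mul_block_col OA yA !mul0mx addr0 add0r.
congr col_mx; apply/matrixP => i j; rewrite !ord1 !mxE.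
by rewrite big_ord1 !mxE eqxx mulr1n.
Qed.

Lemma symmetric_spectral n (A : 'M[R]_n) : A^T = A ->
  exists (O : 'M[R]_n) (d : 'rV[R]_n),
    [/\ O *m O^T = 1%:M, O^T *m O = 1%:M & A = O^T *m diag_mx d *m O].
Proof.
move=> symA; have [O [d [OO OA]]] := symmetric_orthonormal_eigenrows symA (leqnn n).
have O'O := mulmx1C OO.
by exists O, d; split => //; rewrite -mulmxA -OA mulmxA O'O mul1mx.
Qed.

End SymmetricSpectral.

Section Frobenius.
Variable R : realType.
Local Open Scope classical_set_scope.

Lemma mxdotE m n (A B : 'M[R]_(m, n)) : mxdot A B = \sum_i \sum_j A i j * B i j.
Proof.
rewrite /mxdot /mxtrace exchange_big; apply: eq_bigr => j _.
by rewrite mxE; apply: eq_bigr => i _; rewrite mxE.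
Qed.

Lemma mxdotC m n (A B : 'M[R]_(m, n)) : mxdot A B = mxdot B A.
Proof. by rewrite !mxdotE; apply: eq_bigr => i _; apply: eq_bigr => j _; rewrite mulrC. Qed.

Lemma mxdotDr m n (A B C : 'M[R]_(m, n)) : mxdot A (B + C) = mxdot A B + mxdot A C.
Proof. by rewrite /mxdot mulmxDr mxtraceD. Qed.

Lemma mxdotDl m n (A B C : 'M[R]_(m, n)) : mxdot (B + C) A = mxdot B A + mxdot C A.
Proof. by rewrite !(mxdotC _ A) mxdotDr. Qed.

Lemma mxdotZl m n c (A B : 'M[R]_(m, n)) : mxdot (c *: B) A = c * mxdot B A.
Proof. by rewrite /mxdot linearZ /= -scalemxAl mxtraceZ. Qed.

Lemma mxdot_sqrE m n (A : 'M[R]_(m, n)) : mxdot A A = \sum_i \sum_j A i j ^+ 2.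
Proof. by rewrite mxdotE; apply: eq_bigr => i _; apply: eq_bigr => j _; rewrite expr2. Qed.

Lemma mxdot_ge0 m n (A : 'M[R]_(m, n)) : 0 <= mxdot A A.
Proof. by rewrite mxdot_sqrE; apply: sumr_ge0 => i _; apply: sumr_ge0 => j _; apply: sqr_ge0. Qed.

Lemma mxdot_eq0 m n (A : 'M[R]_(m, n)) : mxdot A A = 0 -> A = 0.
Proof.
rewrite mxdot_sqrE => A0; apply/matrixP => i j; rewrite mxE.
apply: (sum_sqr_eq0 _ j).
exact: (@psumr_eq0P _ _ predT _ (fun i _ => sumr_ge0 _ (fun j _ => sqr_ge0 (A i j))) A0 i isT).
Qed.

Lemma frobE m n (A : 'M[R]_(m, n)) : frob A = Num.sqrt (mxdot A A).
Proof. by rewrite mxdot_sqrE. Qed.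

Lemma frob_ge0 m n (A : 'M[R]_(m, n)) : 0 <= frob A.
Proof. exact: sqrtr_ge0. Qed.

Lemma sqr_frob m n (A : 'M[R]_(m, n)) : frob A ^+ 2 = mxdot A A.
Proof. by rewrite frobE sqr_sqrtr // mxdot_ge0. Qed.

Lemma frobZ m n c (A : 'M[R]_(m, n)) : frob (c *: A) = `|c| * frob A.
Proof.
rewrite !frobE mxdotZl mxdotC mxdotZl mulrA -expr2 sqrtrM ?sqr_ge0 //.
by rewrite sqrtr_sqr.
Qed.

Lemma frob_eq0 m n (A : 'M[R]_(m, n)) : frob A = 0 -> A = 0.
Proof. by move=> A0; apply: mxdot_eq0; rewrite -sqr_frob A0 expr0n. Qed.

Lemma vnorm_mulmx_le_frob m n (A : 'M[R]_(m, n)) (x : 'cV[R]_n) :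
  vnorm (A *m x) <= frob A * vnorm x.
Proof.
rewrite -(@ler_pXn2r _ 2) ?nnegrE ?mulr_ge0 ?frob_ge0 ?vnorm_ge0 //.
rewrite exprMn sqr_frob mxdot_sqrE mulr_suml sqr_vnorm vdot_sqrE.
apply: ler_sum => i _.
have -> : (A *m x) i 0 = vdot (row i A)^T x by rewrite /vdot trmxK -row_mul [RHS]mxE.
have -> : \sum_j A i j ^+ 2 = vnorm (row i A)^T ^+ 2.
  by rewrite sqr_vnorm vdot_sqrE; apply: eq_bigr => j _; rewrite !mxE.
rewrite -exprMn -real_normK ?num_real // ler_pXn2r ?nnegrE ?mulr_ge0 ?vnorm_ge0 //.
exact: normr_vdot_le.
Qed.

Lemma vnorm_mulmx_le_specnorm n (W : 'M[R]_n) (x : 'cV[R]_n) :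
  vnorm (W *m x) <= specnorm W * vnorm x.
Proof.
have [->|x_neq0] := eqVneq x 0; first by rewrite mulmx0 vnorm0 mulr0.
have x_gt0 : 0 < vnorm x.
  rewrite lt0r vnorm_ge0 andbT vnormE sqrtr_eq0 -ltNge lt0r vdot_ge0 andbT.
  by apply: contra x_neq0 => /eqP /vdot_eq0 ->.
set y := (vnorm x)^-1 *: x.
have ny : vnorm y = 1.
  by rewrite vnormZ ger0_norm ?invr_ge0 ?ltW // mulVf ?gt_eqF.
have hs : has_sup [set vnorm (W *m x) | x in [set x : 'cV[R]_n | vnorm x = 1]].
  split; first by exists (vnorm (W *m y)), y.
  exists (frob W) => _ [z /= nz <-].
  by rewrite -[frob W]mulr1 -nz vnorm_mulmx_le_frob.
have : vnorm (W *m y) <= specnorm W by apply: (sup_upper_bound hs); exists y.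
rewrite /y -scalemxAr vnormZ ger0_norm ?invr_ge0 ?vnorm_ge0 // => Wy.
by rewrite -[vnorm (W *m x)](mulVKf (lt0r_neq0 x_gt0)) [_ * vnorm x]mulrC ler_pM2l.
Qed.

Lemma contraction_add_specnorm_lt1 n (W G : 'M[R]_n) : specnorm W < 1 ->
  exists2 eps : R, 0 < eps & contraction (W + eps *: G).
Proof.
move=> sW; set s := specnorm W; set g := frob G.
have g_gt0 : 0 < 1 + g by have := frob_ge0 G; rewrite -/g; lra.
have eps_gt0 : 0 < (1 - s) / (1 + g) by rewrite divr_gt0 // subr_gt0.
have eps_g : (1 - s) / (1 + g) * g <= 1 - s.
  rewrite mulrAC ler_pdivrMr //; apply: ler_wpM2l; first by rewrite subr_ge0 ltW.
  by rewrite lerDr.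
exists ((1 - s) / (1 + g)) => // x; rewrite mulmxDl; apply: le_trans (vnormD _ _) _.
rewrite -scalemxAl vnormZ gtr0_norm //.
apply: le_trans (lerD (vnorm_mulmx_le_specnorm W x)
                       (ler_wpM2l (ltW eps_gt0) (vnorm_mulmx_le_frob G x))) _.
rewrite -/s -/g mulrA -mulrDl -{2}(mul1r (vnorm x)) ler_wpM2r ?vnorm_ge0 //.
lra.
Qed.

End Frobenius.

Section NuclearNorm.
Variable R : realType.

Lemma mxE_row_col m n p (A : 'M[R]_(m, n)) (B : 'M[R]_(n, p)) i j :
  (A *m B) i j = (row i A *m col j B) 0 0.
Proof. by rewrite !mxE; apply: eq_bigr => k _; rewrite !mxE. Qed.

Lemma quad_form_diag m n (B : 'M[R]_(m, n)) (d : 'rV[R]_m) (x : 'cV[R]_n) :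
  (x^T *m (B^T *m diag_mx d *m B) *m x) 0 0 = \sum_i d 0 i * (B *m x) i 0 ^+ 2.
Proof.
rewrite !mulmxA -trmx_mul -!mulmxA mulmxA mxE_row_col mxE; apply: eq_bigr => i _.
rewrite mul_mx_diag [row _ _ _ _]mxE [col _ _ _ _]mxE [(\matrix_(_, _) _) _ _]mxE.
by rewrite [_^T _ _]mxE expr2 mulrCA mulrA.
Qed.

Lemma psd_spectral n (M : 'M[R]_n) : psd M ->
  exists (O : 'M[R]_n) (d : 'rV[R]_n),
    [/\ O *m O^T = 1%:M, O^T *m O = 1%:M, M = O^T *m diag_mx d *m O &
        forall i, 0 <= d 0 i].
Proof.
move=> [symM psdM]; have [O [d [OO O'O Me]]] := symmetric_spectral symM.
exists O, d; split => // i; have := psdM (col i O^T).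
have -> : (col i O^T)^T *m M *m col i O^T = ((O *m M *m O^T) i i)%:M.
  rewrite [LHS]mx11_scalar; congr (_%:M).
  by rewrite [RHS]mxE_row_col row_mul tr_col trmxK.
by rewrite Me !mulmxA OO mul1mx -!mulmxA OO mulmx1 !mxE eqxx mulr1n.
Qed.

Lemma psd_quad_eq0 n (M : 'M[R]_n) (x : 'cV[R]_n) : psd M ->
  (x^T *m M *m x) 0 0 = 0 -> M *m x = 0.
Proof.
move=> pM; have [O [d [OO O'O -> d_ge0]]] := psd_spectral pM.
rewrite quad_form_diag => q0.
have dOx0 i : d 0 i * (O *m x) i 0 = 0.
  have := @psumr_eq0P _ _ predT (fun i => d 0 i * (O *m x) i 0 ^+ 2).
  move=> /(_ (fun i _ => mulr_ge0 (d_ge0 i) (sqr_ge0 _)) q0 i isT) /eqP.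
  by rewrite mulf_eq0 sqrf_eq0 => /orP [] /eqP ->; rewrite ?mul0r ?mulr0.
have dOx : diag_mx d *m (O *m x) = 0.
  by apply/matrixP => i j; rewrite ord1 mul_diag_mx [LHS]mxE dOx0 mxE.
by rewrite -!mulmxA dOx mulmx0.
Qed.

Lemma psd_mxtrace_quad n (M B : 'M[R]_n) : psd M ->
  0 <= \tr (B^T *m M *m B) /\ (\tr (B^T *m M *m B) = 0 -> M *m B = 0).
Proof.
move=> pM.
have -> : \tr (B^T *m M *m B) = \sum_i ((col i B)^T *m M *m col i B) 0 0.
  by apply: eq_bigr => i _; rewrite [LHS]mxE_row_col row_mul tr_col.
have ge0 i : 0 <= ((col i B)^T *m M *m col i B) 0 0 by apply: pM.2.
split; first exact: sumr_ge0.
move=> tr0; apply/matrixP => i j.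
have := @psumr_eq0P _ _ predT _ (fun i _ => ge0 i) tr0 j isT.
move=> /(psd_quad_eq0 pM); rewrite colE mulmxA -colE => /matrixP /(_ i 0).
by rewrite !mxE.
Qed.

(* With D = P - Q, PD + DQ = P^2 - Q^2 = 0, so tr(D P D) + tr(D Q D) = 0 and
   both nonnegative traces vanish. *)
Lemma psd_sqrt_uniq n (P Q : 'M[R]_n) : psd P -> psd Q -> P *m P = Q *m Q -> P = Q.
Proof.
move=> pP pQ PQ; set D := P - Q.
have symD : D^T = D by rewrite /D linearB /= pP.1 pQ.1.
have E : P *m D + D *m Q = 0 by rewrite /D mulmxBr mulmxBl PQ addrA subrK subrr.
have trE : \tr (D^T *m P *m D) + \tr (D^T *m Q *m D) = 0.
  rewrite symD -[D *m P *m D]mulmxA (mxtrace_mulC (D *m Q) D).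
  by rewrite -mxtraceD -mulmxDr E mulmx0 mxtrace0.
have [ge1 eq1] := psd_mxtrace_quad D pP; have [ge2 eq2] := psd_mxtrace_quad D pQ.
have DD : D^T *m D = 0.
  by rewrite symD {1}/D mulmxBl eq1 ?eq2 ?subrr //; lra.
apply/eqP; rewrite -subr_eq0 -/D; apply/eqP/mxdot_eq0.
by rewrite /mxdot DD mxtrace0.
Qed.

Lemma psd_sqrt_exists m n (L : 'M[R]_(m, n)) :
  exists P, psd P /\ P *m P = L^T *m L.
Proof.
have symA : (L^T *m L)^T = L^T *m L by rewrite trmx_mul trmxK.
have [O [d [OO O'O Ae]]] := symmetric_spectral symA.
have d_ge0 i : 0 <= d 0 i.
  have : (L *m O^T)^T *m (L *m O^T) = diag_mx d.
    by rewrite trmx_mul trmxK !mulmxA -(mulmxA O) Ae !mulmxA OO mul1mx -mulmxA OO mulmx1.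
  move=> /matrixP /(_ i i); rewrite [RHS]mxE eqxx mulr1n => <-.
  by rewrite mxE; apply: sumr_ge0 => k _; rewrite mxE -expr2 sqr_ge0.
pose s := \row_j Num.sqrt (d 0 j).
exists (O^T *m diag_mx s *m O); split; [split|].
- by rewrite !trmx_mul trmxK tr_diag_mx mulmxA.
- move=> x; rewrite quad_form_diag; apply: sumr_ge0 => i _.
  by rewrite mulr_ge0 ?sqr_ge0 // mxE sqrtr_ge0.
- rewrite Ae !mulmxA -[O^T *m diag_mx s *m O *m O^T]mulmxA OO mulmx1.
  rewrite -[O^T *m diag_mx s *m diag_mx s]mulmxA mulmx_diag.
  do 2 congr (_ *m _); congr diag_mx; apply/rowP => j.
  by rewrite !mxE -expr2 sqr_sqrtr.
Qed.

Lemma sqrtmP m n (L : 'M[R]_(m, n)) :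
  psd (sqrtm (L^T *m L)) /\ sqrtm (L^T *m L) *m sqrtm (L^T *m L) = L^T *m L.
Proof. exact: (xgetPex 0 (psd_sqrt_exists L)). Qed.

(* Diagonalize |L| = sqrtm (L^T L) in an orthonormal basis (c_i): then
   <Z, L> = sum_i <Z c_i, L c_i> <= sum_i |L c_i| = sum_i d_i = ||L||_*. *)
Lemma nucnorm_ge_mxdot m n (Z L : 'M[R]_(m, n)) :
  contraction Z -> mxdot Z L <= nucnorm L.
Proof.
move=> Zc; have [pP PP] := sqrtmP L.
rewrite /nucnorm; set P := sqrtm _ in pP PP *.
have [O [d [OO O'O Pe d_ge0]]] := psd_spectral pP.
have -> : \tr P = \sum_i d 0 i.
  by rewrite Pe mxtrace_mulC mulmxA OO mul1mx mxtrace_diag.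
have rowO i : row i O = (col i O^T)^T by rewrite tr_col trmxK.
have -> : mxdot Z L = \sum_i vdot (Z *m col i O^T) (L *m col i O^T).
  rewrite /mxdot -[Z^T *m L]mulmx1 -O'O !mulmxA mxtrace_mulC !mulmxA.
  by apply: eq_bigr => i _; rewrite /vdot [LHS]mxE_row_col !row_mul rowO trmx_mul !mulmxA.
apply: ler_sum => i _; set c := col i O^T.
have nc : vnorm c = 1.
  by rewrite vnormE /vdot -rowO -mxE_row_col OO mxE eqxx mulr1n sqrtr1.
have Pc : P *m c = d 0 i *: c.
  rewrite /c colE mulmxA Pe -[O^T *m diag_mx d *m O *m O^T]mulmxA OO mulmx1.
  rewrite -mulmxA scalemxAr; congr (_ *m _).
  apply/matrixP => a b; rewrite mul_diag_mx !mxE.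
  by case: (eqVneq a i) => [->|]; rewrite ?andFb ?mulr0 ?mulr1n.
have nLc : vnorm (L *m c) = d 0 i.
  rewrite vnormE /vdot trmx_mul -mulmxA [L^T *m _]mulmxA -PP.
  rewrite -mulmxA mulmxA -{1}pP.1 -trmx_mul Pc -/(vdot _ _) -sqr_vnorm vnormZ.
  by rewrite nc mulr1 sqrtr_sqr normr_id ger0_norm.
apply: le_trans (vdot_le _ _) _.
by rewrite nLc -{2}(mul1r (d 0 i)) ler_wpM2r // -nc Zc.
Qed.

Lemma nucnorm_svd n r (U V : 'M[R]_(n, r)) (sigma : 'rV[R]_r) :
  U^T *m U = 1%:M -> V^T *m V = 1%:M -> (forall k, 0 <= sigma 0 k) ->
  nucnorm (U *m diag_mx sigma *m V^T) = \sum_k sigma 0 k.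
Proof.
move=> UU VV sigma_ge0; set L0 := U *m _ *m _.
set P0 := V *m diag_mx sigma *m V^T.
have pP0 : psd P0.
  split; first by rewrite /P0 !trmx_mul trmxK tr_diag_mx mulmxA.
  move=> x; rewrite /P0 -{1}(trmxK V) quad_form_diag; apply: sumr_ge0 => i _.
  by rewrite mulr_ge0 ?sqr_ge0.
have P0P0 : P0 *m P0 = L0^T *m L0.
  rewrite /P0 /L0 !trmx_mul trmxK tr_diag_mx !mulmxA.
  rewrite -[V *m diag_mx sigma *m V^T *m V]mulmxA VV mulmx1.
  by rewrite -[V *m diag_mx sigma *m U^T *m U]mulmxA UU mulmx1.
have [pP PP] := sqrtmP L0.
rewrite /nucnorm (psd_sqrt_uniq pP pP0 (etrans PP (esym P0P0))).
by rewrite /P0 mxtrace_mulC mulmxA VV mul1mx mxtrace_diag.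
Qed.

End NuclearNorm.

Section EntrySupport.
Variables (R : realType) (n : nat).
Implicit Types (A : {set 'I_n * 'I_n}) (M N S : 'M[R]_n).

Lemma PAperpE A M i j : PAperp A M i j = if (i, j) \in A then 0 else M i j.
Proof. by rewrite /PAperp /PA !mxE; case: ifP; rewrite ?subrr ?subr0. Qed.

Lemma PAperp_eq0 A M i j : PAperp A M = 0 -> (i, j) \notin A -> M i j = 0.
Proof. by move=> /matrixP /(_ i j); rewrite PAperpE mxE => + /negPf ij; rewrite ij. Qed.

Lemma frob_PAperp A M : frob (PAperp A M) <= frob M.
Proof.
rewrite !frobE ler_sqrt ?mxdot_ge0 // !mxdot_sqrE.
apply: ler_sum => i _; apply: ler_sum => j _.
by rewrite PAperpE; case: ifP; rewrite ?expr0n ?sqr_ge0.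
Qed.

Lemma PA_addr_supp A M S : (forall i j, (i, j) \notin A -> S i j = 0) ->
  PA A (M + S) = PA A M + S.
Proof.
move=> S_supp; apply/matrixP => i j; rewrite !mxE.
by case: ifP => // /negbT ij; rewrite S_supp ?add0r.
Qed.

Lemma PA_entry A M N i j : PA A M = PA A N -> (i, j) \in A -> M i j = N i j.
Proof. by move=> /matrixP /(_ i j) + ij; rewrite !mxE ij. Qed.

Lemma normr_le_linfnorm M i j : `|M i j| <= linfnorm M.
Proof. exact: le_trans (le_bigmax _ (fun j => `|M i j|) j) (le_bigmax _ _ i). Qed.

End EntrySupport.

Section TangentSpace.
Variables (R : realType) (n r : nat) (U V : 'M[R]_(n, r)).
Hypotheses (UU : U^T *m U = 1%:M) (VV : V^T *m V = 1%:M).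
Implicit Types (M P Q : 'M[R]_n).

Lemma inTD P Q : inT U V P -> inT U V Q -> inT U V (P + Q).
Proof.
move=> [X1 [Y1 ->]] [X2 [Y2 ->]]; exists (X1 + X2), (Y1 + Y2).
by rewrite linearD /= mulmxDr mulmxDl addrACA.
Qed.

Lemma inTZ c P : inT U V P -> inT U V (c *: P).
Proof.
move=> [X [Y ->]]; exists (c *: X), (c *: Y).
by rewrite linearZ /= -scalemxAr -scalemxAl scalerDr.
Qed.

Lemma inTB P Q : inT U V P -> inT U V Q -> inT U V (P - Q).
Proof. by move=> hP hQ; rewrite -scaleN1r; apply/inTD/inTZ. Qed.

Lemma mxdot_perp_inT G Q : U^T *m G = 0 -> G *m V = 0 -> inT U V Q -> mxdot G Q = 0.
Proof.
move=> UG GV [X [Y ->]]; rewrite mxdotDr /mxdot.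
have -> : G^T *m (U *m X^T) = (U^T *m G)^T *m X^T by rewrite trmx_mul trmxK mulmxA.
rewrite UG trmx0 mul0mx mxtrace0 add0r.
by rewrite mulmxA mxtrace_mulC mulmxA -trmx_mul GV trmx0 mul0mx mxtrace0.
Qed.

Definition PTperp M : 'M[R]_n := (1%:M - U *m U^T) *m M *m (1%:M - V *m V^T).

Lemma inT_subPTperp M : inT U V (M - PTperp M).
Proof.
exists (M^T *m U), ((1%:M - U *m U^T) *m M *m V).
rewrite /PTperp trmx_mul trmxK mulmxBr mulmx1 !mulmxA opprB addrC.
by rewrite mulmxBl mul1mx opprB -addrA subrK addrC.
Qed.

Lemma mulmx_PTperp M : U^T *m PTperp M = 0.
Proof.
have UP : U^T *m (1%:M - U *m U^T) = 0 by rewrite mulmxBr mulmx1 mulmxA UU mul1mx subrr.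
by rewrite /PTperp !mulmxA UP !mul0mx.
Qed.

Lemma PTperp_mulmx M : PTperp M *m V = 0.
Proof.
have PV : (1%:M - V *m V^T) *m V = 0 by rewrite mulmxBl mul1mx -mulmxA VV mulmx1 subrr.
by rewrite /PTperp -!mulmxA PV !mulmx0.
Qed.

Lemma mxdot_PTperp M : mxdot (PTperp M) M = mxdot (PTperp M) (PTperp M).
Proof.
rewrite -{2}(subrK (PTperp M) M) mxdotDr.
by rewrite (mxdot_perp_inT (mulmx_PTperp M) (PTperp_mulmx M) (inT_subPTperp M)) add0r.
Qed.

Lemma PT_spec M : inT U V (PT U V M) /\
  forall Q, inT U V Q -> mxdot (M - PT U V M) Q = 0.
Proof.
suff PM : exists P, inT U V P /\ forall Q, inT U V Q -> mxdot (M - P) Q = 0.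
  exact: (xgetPex 0 PM).
exists (M - PTperp M); split; first exact: inT_subPTperp.
move=> Q TQ; rewrite opprB addrC subrK.
exact: mxdot_perp_inT (mulmx_PTperp M) (PTperp_mulmx M) TQ.
Qed.

Lemma PT_id M : inT U V M -> PT U V M = M.
Proof.
move=> TM; have [TP perp] := PT_spec M.
have TD : inT U V (M - PT U V M) by apply: inTB.
by apply/eqP; rewrite eq_sym -subr_eq0; apply/eqP/mxdot_eq0/perp.
Qed.

Lemma frob_PT M : frob (PT U V M) <= frob M.
Proof.
have [TP perp] := PT_spec M; set P := PT U V M in TP perp *.
rewrite !frobE ler_sqrt ?mxdot_ge0 //.
have -> : mxdot M M = mxdot ((M - P) + P) ((M - P) + P) by rewrite subrK.
rewrite mxdotDl (mxdotDr (M - P)) (mxdotDr P) (mxdotC P (M - P)) (perp _ TP).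
by have := mxdot_ge0 (M - P); lra.
Qed.

Lemma PT_eq0 M : PT U V M = 0 -> U^T *m M = 0 /\ M *m V = 0.
Proof.
move=> PM0; have [_ perp] := PT_spec M; rewrite PM0 subr0 in perp.
split; apply: mxdot_eq0.
  have := perp (U *m (U^T *m M)).
  rewrite /mxdot trmx_mul mulmxA => <-; last first.
    by exists (M^T *m U), 0; rewrite mul0mx addr0 trmx_mul trmxK mulmxA.
  by rewrite trmxK !mulmxA.
have := perp (M *m V *m V^T).
rewrite /mxdot trmx_mul => <-; last by exists 0, (M *m V); rewrite trmx0 mulmx0 add0r.
by rewrite (mulmxA M^T) (mulmxA M^T) (mxtrace_mulC (M^T *m M *m V)) !mulmxA.
Qed.

(* A nonzero H in T vanishing on Gamma would be a fixed point of
   P_{Gamma^perp} P_T, giving that operator norm at least 1. *)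
Lemma inT_eq0_opnorm_lt1 (Gamma : {set 'I_n * 'I_n}) (H : 'M[R]_n) :
  opnorm_frob (fun M => PAperp Gamma (PT U V M)) < 1 -> inT U V H ->
  (forall i j, (i, j) \in Gamma -> H i j = 0) -> H = 0.
Proof.
move=> op_lt1 TH H_Gamma; apply: frob_eq0.
have [//|H_neq0] := eqVneq (frob H) 0.
have H_gt0 : 0 < frob H by rewrite lt0r H_neq0 frob_ge0.
set M := (frob H)^-1 *: H.
have fM : frob M = 1 by rewrite frobZ ger0_norm ?invr_ge0 ?ltW // mulVf.
have PM : PAperp Gamma (PT U V M) = M.
  rewrite PT_id; last exact: inTZ.
  apply/matrixP => i j; rewrite PAperpE; case: ifP => // ij.
  by rewrite mxE H_Gamma // mulr0.
have hs : has_sup [set frob (PAperp Gamma (PT U V M)) | M in [set M | frob M <= 1]].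
  split; first by exists 1, M => //=; rewrite ?PM ?fM.
  exists 1 => _ [N /= N_le1 <-].
  exact: le_trans (frob_PAperp _ _) (le_trans (frob_PT _) N_le1).
have : 1 <= opnorm_frob (fun M => PAperp Gamma (PT U V M)).
  by apply: (sup_upper_bound hs); exists M => //=; rewrite ?PM ?fM.
by move=> /le_lt_trans /(_ op_lt1); rewrite ltxx.
Qed.

(* Split x = V a + y with V^T y = 0: |Z x|^2 = |a|^2 + |W0 y|^2 <= |a|^2 + |y|^2 = |x|^2. *)
Lemma contraction_orthonormal_add W0 : U^T *m W0 = 0 -> W0 *m V = 0 ->
  contraction W0 -> contraction (U *m V^T + W0).
Proof.
move=> UW0 W0V W0c x; rewrite !vnormE ler_sqrt ?vdot_ge0 //.
set a := V^T *m x; set y := x - V *m a.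
have Zx : (U *m V^T + W0) *m x = U *m a + W0 *m y.
  by rewrite /y mulmxDl mulmxA mulmxBr mulmxA W0V mul0mx subr0.
have xE : x = V *m a + y by rewrite /y addrC subrK.
have Va_y : vdot (V *m a) y = 0.
  rewrite /vdot /y trmx_mul mulmxBr -[a^T *m V^T *m x]mulmxA -/a.
  by rewrite (mulmxA (a^T *m V^T)) -(mulmxA a^T V^T) VV mulmx1 subrr mxE.
have Ua_W0y : vdot (U *m a) (W0 *m y) = 0.
  by rewrite /vdot trmx_mul -mulmxA (mulmxA U^T) UW0 mul0mx mulmx0 mxE.
have UaUa : vdot (U *m a) (U *m a) = vdot a a.
  by rewrite /vdot trmx_mul -mulmxA (mulmxA U^T) UU mul1mx.
have VaVa : vdot (V *m a) (V *m a) = vdot a a.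
  by rewrite /vdot trmx_mul -mulmxA (mulmxA V^T) VV mul1mx.
have W0y : vdot (W0 *m y) (W0 *m y) <= vdot y y.
  by rewrite -!sqr_vnorm ler_pXn2r ?nnegrE ?vnorm_ge0.
clearbody a y; rewrite Zx xE !vdotDD Ua_W0y Va_y UaUa VaVa.
lra.
Qed.

Lemma mxdot_svd (sigma : 'rV[R]_r) W0 : U^T *m W0 = 0 ->
  mxdot (U *m V^T + W0) (U *m diag_mx sigma *m V^T) = \sum_k sigma 0 k.
Proof.
move=> UW0; have W0U : W0^T *m U = 0 by rewrite -(trmxK U) -trmx_mul UW0 trmx0.
rewrite mxdotDl {2}/mxdot !mulmxA W0U !mul0mx mxtrace0 addr0.
rewrite /mxdot trmx_mul trmxK !mulmxA -[V *m U^T *m U]mulmxA UU mulmx1.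
by rewrite mxtrace_mulC mulmxA VV mul1mx mxtrace_diag.
Qed.

End TangentSpace.

Section Certificate.
Variables (R : realType) (n r : nat) (U V : 'M[R]_(n, r)) (sigma : 'rV[R]_r).
Variables (L0 S0' W F : 'M[R]_n) (lambda : R) (Omega_obs Omega : {set 'I_n * 'I_n}).
Hypotheses (UU : U^T *m U = 1%:M) (VV : V^T *m V = 1%:M).
Hypothesis L0E : L0 = U *m diag_mx sigma *m V^T.
Hypothesis sigma_ge0 : forall k, 0 <= sigma 0 k.
Hypothesis lambda_gt0 : 0 < lambda.
Hypothesis Omega_sub : Omega \subset Omega_obs.
Hypothesis S0'_supp : forall i j, (i, j) \notin Omega -> S0' i j = 0.
Hypothesis cert : U *m V^T + W = lambda *: (sgnmx S0' + F).
Hypothesis PTW : PT U V W = 0.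
Hypothesis F_supp : forall i j, (i, j) \notin Omega_obs :\: Omega -> F i j = 0.
Hypothesis F_lt1 : forall i j, `|F i j| < 1.

Variables L S : 'M[R]_n.
Hypothesis feasible :
  forall i j, (i, j) \in Omega_obs -> L i j + S i j = L0 i j + S0' i j.

Local Notation H := (L - L0).
Local Notation G := (PTperp U V (L - L0)).
Local Notation gain i j :=
  (if (i, j) \in Omega then 0 else (1 - `|F i j|) * `|S i j|).

Lemma gain_ge0 i j : 0 <= gain i j.
Proof. by case: ifP => // _; rewrite mulr_ge0 // subr_ge0 ltW. Qed.

(* On Omega this is |S0'| + sgn(S0') (S - S0') <= |S|; off Omega, S0' = 0,
   and feasibility gives H = -S on Gamma, where |F| < 1, and F = 0 elsewhere. *)
Lemma gain_le_entry i j :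
  gain i j <= (sgnmx S0' + F) i j * H i j + `|S i j| - `|S0' i j|.
Proof.
rewrite !mxE; case: (boolP ((i, j) \in Omega)) => ij_Omega.
  have ij_obs : (i, j) \in Omega_obs by apply: (fintype.subsetP Omega_sub).
  rewrite F_supp ?addr0; last by rewrite finset.in_setD ij_Omega.
  have -> : L i j - L0 i j = S0' i j - S i j by have := @feasible i j ij_obs; lra.
  rewrite mulrBr -normrEsg.
  have : Num.sg (S0' i j) * S i j <= `|S i j|.
    apply: le_trans (ler_norm _) _; rewrite normrM normr_sg.
    by case: (_ != 0); rewrite ?mul1r ?mul0r.
  lra.
rewrite S0'_supp // sgr0 normr0 add0r subr0.
case: (boolP ((i, j) \in Omega_obs :\: Omega)) => ij_Gamma; last first.
  by rewrite F_supp // normr0 subr0 mul1r mul0r add0r.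
have ij_obs : (i, j) \in Omega_obs by move: ij_Gamma; rewrite finset.in_setD => /andP [].
have -> : L i j - L0 i j = - S i j.
  by have := @feasible i j ij_obs; rewrite S0'_supp //; lra.
have : F i j * S i j <= `|F i j| * `|S i j| by rewrite -normrM; apply: ler_norm.
rewrite mulrN mulrBl mul1r; lra.
Qed.

Lemma sum_gain_le :
  \sum_i \sum_j gain i j <= mxdot (sgnmx S0' + F) H + l1norm S - l1norm S0'.
Proof.
rewrite mxdotE /l1norm -big_split -sumrB /=; apply: ler_sum => i _.
by rewrite -big_split -sumrB /=; apply: ler_sum => j _; apply: gain_le_entry.
Qed.

Lemma nucnorm_ge_cert eps : contraction (W + eps *: G) ->
  nucnorm L0 + lambda * mxdot (sgnmx S0' + F) H + eps * mxdot G G <= nucnorm L.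
Proof.
move=> W0c; have [UW WV] := PT_eq0 UU VV PTW.
have UW0 : U^T *m (W + eps *: G) = 0.
  by rewrite mulmxDr UW -scalemxAr mulmx_PTperp // scaler0 addr0.
have W0V : (W + eps *: G) *m V = 0.
  by rewrite mulmxDl WV -scalemxAl PTperp_mulmx // scaler0 addr0.
have ZL0 W0 : U^T *m W0 = 0 -> mxdot (U *m V^T + W0) L0 = nucnorm L0.
  by move=> UW0'; rewrite L0E mxdot_svd // nucnorm_svd.
have := nucnorm_ge_mxdot L (contraction_orthonormal_add UU VV UW0 W0V W0c).
set Z := U *m V^T + (W + eps *: G).
have ZH : mxdot Z H = lambda * mxdot (sgnmx S0' + F) H + eps * mxdot G G.
  by rewrite /Z addrA cert (mxdotDl H (lambda *: _)) !mxdotZl mxdot_PTperp.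
by rewrite -[X in mxdot _ X](subrK L0) (mxdotDr Z) ZH ZL0 //; lra.
Qed.

Lemma objective_gap eps : contraction (W + eps *: G) ->
  nucnorm L0 + lambda * l1norm S0' + (lambda * \sum_i \sum_j gain i j + eps * mxdot G G)
    <= nucnorm L + lambda * l1norm S.
Proof.
move=> W0c; have := nucnorm_ge_cert W0c.
have := ler_wpM2l (ltW lambda_gt0) sum_gain_le.
rewrite !mulrBr mulrDr; lra.
Qed.

Hypothesis Gamma_opnorm :
  opnorm_frob (fun M => PAperp (Omega_obs :\: Omega) (PT U V M)) < 1.
Hypothesis W_lt1 : specnorm W < 1.

Lemma objective_le_eq :
  nucnorm L + lambda * l1norm S <= nucnorm L0 + lambda * l1norm S0' ->
  L = L0 /\ S = S0'.
Proof.
move=> obj_le; have [eps eps_gt0 W0c] := contraction_add_specnorm_lt1 G W_lt1.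
have sum_gain_ge0 : 0 <= \sum_i \sum_j gain i j.
  by apply: sumr_ge0 => i _; apply: sumr_ge0 => j _; apply: gain_ge0.
have lgain_ge0 : 0 <= lambda * \sum_i \sum_j gain i j by rewrite mulr_ge0 // ltW.
have eG_ge0 : 0 <= eps * mxdot G G by rewrite mulr_ge0 ?mxdot_ge0 // ltW.
have gap := objective_gap W0c.
have /eqP : lambda * \sum_i \sum_j gain i j = 0 by lra.
rewrite mulf_eq0 gt_eqF //= => /eqP sum_gain0.
have /eqP : eps * mxdot G G = 0 by lra.
rewrite mulf_eq0 gt_eqF //= => /eqP /mxdot_eq0 G0.
have gain0 i j : gain i j = 0.
  have := @psumr_eq0P _ _ predT _ (fun i _ => sumr_ge0 _ (fun j _ => gain_ge0 i j)) sum_gain0 i isT.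
  by move/(@psumr_eq0P _ _ predT _ (fun j _ => gain_ge0 i j))/(_ j isT).
have S_supp i j : (i, j) \notin Omega -> S i j = 0.
  move=> ij; have := gain0 i j; rewrite (negPf ij) => /eqP.
  rewrite mulf_eq0 normr_eq0 subr_eq0 => /orP [/eqP F1|/eqP //].
  by have := F_lt1 i j; rewrite -F1 ltxx.
have H0 : H = 0.
  apply: (inT_eq0_opnorm_lt1 UU VV Gamma_opnorm).
    by have := inT_subPTperp U V H; rewrite G0 subr0.
  move=> i j ij_Gamma; move: (ij_Gamma); rewrite finset.in_setD => /andP [ij_Omega ij_obs].
  by have := @feasible i j ij_obs; rewrite S_supp // S0'_supp // !mxE; lra.
have LL0 : L = L0 by rewrite -[L](subrK L0) H0 add0r.
split=> //; apply/matrixP => i j.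
case: (boolP ((i, j) \in Omega)) => ij; last by rewrite S_supp // S0'_supp.
by have := @feasible i j (fintype.subsetP Omega_sub _ ij); rewrite LL0; lra.
Qed.

End Certificate.

Unset Implicit Arguments.

Theorem lemma7p1 (R : realType) (n r : nat)
  (L0 : 'M[R]_n) (U V : 'M[R]_(n, r)) (sigma : 'rV[R]_r)
  (lambda : R) (Omega_obs Omega : {set 'I_n * 'I_n}) (S0' : 'M[R]_n) :
  U^T *m U = 1%:M -> V^T *m V = 1%:M ->
  (forall k, 0 < sigma 0 k) ->
  L0 = U *m diag_mx sigma *m V^T ->
  0 < lambda ->
  Omega \subset Omega_obs ->
  (forall i j, (i, j) \notin Omega -> S0' i j = 0) ->
  opnorm_frob (fun M => PAperp (Omega_obs :\: Omega) (PT U V M)) < 1 ->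
  (exists W F : 'M[R]_n,
     U *m V^T + W = lambda *: (sgnmx S0' + F) /\
     PT U V W = 0 /\ specnorm W < 1 /\
     PAperp (Omega_obs :\: Omega) F = 0 /\ linfnorm F < 1) ->
  (PA Omega_obs (L0 + S0') = PA Omega_obs L0 + S0' /\
   forall L S : 'M[R]_n,
     PA Omega_obs (L + S) = PA Omega_obs L0 + S0' ->
     (L, S) <> (L0, S0') ->
     nucnorm L0 + lambda * l1norm S0' < nucnorm L + lambda * l1norm S).
Proof.
move=> UU VV sigma_gt0 L0E lambda_gt0 Omega_sub S0'_supp Gamma_opnorm.
move=> [W [F [cert [PTW [W_lt1 [PF F_linf]]]]]].
have sigma_ge0 k : 0 <= sigma 0 k := ltW (sigma_gt0 k).
have F_supp i j : (i, j) \notin Omega_obs :\: Omega -> F i j = 0 := PAperp_eq0 PF.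
have F_lt1 i j : `|F i j| < 1 := le_lt_trans (normr_le_linfnorm F i j) F_linf.
have S0'_obs i j : (i, j) \notin Omega_obs -> S0' i j = 0.
  by move=> ij; apply: S0'_supp; apply: contra ij; apply: fintype.subsetP.
have PA_feasible := PA_addr_supp L0 S0'_obs.
split=> // L S feas LS_neq; rewrite ltNge; apply/negP => obj_le; apply: LS_neq.
have feasible i j : (i, j) \in Omega_obs -> L i j + S i j = L0 i j + S0' i j.
  by move=> ij; have := PA_entry (etrans feas (esym PA_feasible)) ij; rewrite !mxE.
by have [-> ->] := objective_le_eq UU VV L0E sigma_ge0 lambda_gt0 Omega_sub
  S0'_supp cert PTW F_supp F_lt1 feasible Gamma_opnorm W_lt1 obj_le.
Qed.
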